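(* Use of the Euler-Poincar\'e (EP) theorem yields the following Kelvin circulation theorem \begin{align} \frac{d}{dt}\oint_{c(\mathbf{\widehat v})} \big( \mathbf{\widehat{v}}\cdot d\mathbf{r} + \sigma^2\widehat{w}\,d\zeta\big) = - \oint_{c(\mathbf{\widehat v})} \frac{1}{\rho}d{\widetilde p}\,. \end{align}
   Context: Setting: a 2D free surface model (composition of maps) in which the horizontal current is a flow map $\phi_t:\mathbb{R}^2\to\mathbb{R}^2$ with velocity $\mathbf{\widehat v}(\mathbf{r},t)$, and the wave is a vertical elevation $\zeta(\mathbf{r},t)$ carried by the current, with vertical velocity $\widehat{w} = \partial_t\zeta + \mathbf{\widehat{v}}\cdot\nabla_{\mathbf{r}}\zeta$. The dynamics follow from Hamilton's principle $0=\delta\int_a^b \ell\,dt$ with $\ell(\mathbf{\widehat{v}},\zeta,D,\rho)=\int_{\cal D}\Big( \tfrac{1}{2}\big( |\mathbf{\widehat{v}}|^2 + \sigma^2\widehat w^2 \big) - \tfrac{\rho_{ref}}{\rho} \tfrac{\zeta^2}{2Fr^2} \Big) D\rho - p(D-1)\,d^2r$, where $\sigma^2$ (squared aspect ratio) and $Fr^2$ (squared Froude number) are dimensionless constants, $\rho_{ref}$ is a constant reference density, the areal density $D\,d^2r$ and buoyancy $\rho$ are advected by $\mathbf{\widehat v}$ ($\partial_t D + \mathrm{div}(D\mathbf{\widehat v})=0$, $\partial_t\rho+\mathbf{\widehat v}\cdot\nabla\rho=0$), and the pressure $p$ is a Lagrange multiplier enforcing $D=1$, i.e. $\mathrm{div}\,\mathbf{\widehat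 v}=0$. Here $\widetilde p := p + \rho_{ref}\zeta^2/(2Fr^2)$, and $c(\mathbf{\widehat v})$ is a closed loop moving with the horizontal flow velocity $\mathbf{\widehat v}$. *)

From Stdlib Require Import Reals List.
From Coquelicot Require Import Coquelicot.
Open Scope R_scope.

(* A scalar field on space-time: (x, y, t) |-> f x y t, with (x,y) in R^2. *)
Definition field := R -> R -> R -> R.

Definition dx (f : field) : field := fun x y t => Derive (fun a => f a y t) x.
Definition dy (f : field) : field := fun x y t => Derive (fun b => f x b t) y.
Definition dt (f : field) : field := fun x y t => Derive (fun s => f x y s) t.

Definition pd (i : nat) (f : field) : field :=
  match i with 0%nat => dx f | 1%nat => dy f | _ => dt f end.

Definition ex_pd (i : nat) (f : field) (x y t : R) : Prop :=
  match i with
  | 0%nat => ex_derive (fun a => f a y t) x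
  | 1%nat => ex_derive (fun b => f x b t) y
  | _ => ex_derive (fun s => f x y s) t
  end.

Fixpoint iter_pd (l : list nat) (f : field) : field :=
  match l with nil => f | i :: l' => pd i (iter_pd l' f) end.

Definition smooth3 (f : field) : Prop :=
  forall (l : list nat) (x y t : R),
    (forall i, ex_pd i (iter_pd l f) x y t) /\
    continuous (fun q : R * R * R => iter_pd l f (fst (fst q)) (snd (fst q)) (snd q)) (x, y, t).

Definition smooth1 (g : R -> R) : Prop := forall (n : nat) (s : R), ex_derive_n g n s.

Definition w_of (v1 v2 zeta : field) : field :=
  fun x y t => dt zeta x y t + v1 x y t * dx zeta x y t + v2 x y t * dy zeta x y t.

Definition ptilde (rhoref Fr2 : R) (p zeta : field) : field :=
  fun x y t => p x y t + rhoref * (zeta x y t) ^ 2 / (2 * Fr2).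

(* Variational derivatives of
   l = int ( 1/2 (|v|^2 + sigma^2 w^2) - (rho_ref/rho) zeta^2/(2 Fr^2) ) D rho - p (D - 1). *)
(* delta l / delta v  (components) *)
Definition m1 (sigma2 : R) (v1 v2 zeta rho D : field) : field :=
  fun x y t => D x y t * rho x y t *
               (v1 x y t + sigma2 * w_of v1 v2 zeta x y t * dx zeta x y t).
Definition m2 (sigma2 : R) (v1 v2 zeta rho D : field) : field :=
  fun x y t => D x y t * rho x y t *
               (v2 x y t + sigma2 * w_of v1 v2 zeta x y t * dy zeta x y t).
Definition dl_dD (sigma2 rhoref Fr2 : R) (v1 v2 zeta rho p : field) : field :=
  fun x y t => / 2 * rho x y t * ((v1 x y t) ^ 2 + (v2 x y t) ^ 2
                                   + sigma2 * (w_of v1 v2 zeta x y t) ^ 2)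
               - rhoref * (zeta x y t) ^ 2 / (2 * Fr2) - p x y t.
Definition dl_drho (sigma2 : R) (v1 v2 zeta D : field) : field :=
  fun x y t => D x y t * (/ 2 * ((v1 x y t) ^ 2 + (v2 x y t) ^ 2
                                   + sigma2 * (w_of v1 v2 zeta x y t) ^ 2)).

(* Euler-Poincare equations (with advected quantities D d^2r and rho) for this l:
   (d_t + L_v)(m . dr (x) d^2r) = D grad(dl/dD) - (dl/drho) grad rho,
   written in coordinates, together with the zeta Euler-Lagrange equation
   (delta l / delta zeta = 0), the advection laws and the constraint D = 1. *)
Definition EP_equations (sigma2 rhoref Fr2 : R) (v1 v2 zeta rho D p : field) : Prop :=
  let m1f := m1 sigma2 v1 v2 zeta rho D in
  let m2f := m2 sigma2 v1 v2 zeta rho D in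
  let lD := dl_dD sigma2 rhoref Fr2 v1 v2 zeta rho p in
  let lr := dl_drho sigma2 v1 v2 zeta D in
  let w := w_of v1 v2 zeta in
  forall x y t,
    dt m1f x y t + dx (fun a b s => v1 a b s * m1f a b s) x y t
      + dy (fun a b s => v2 a b s * m1f a b s) x y t
      + m1f x y t * dx v1 x y t + m2f x y t * dx v2 x y t
    = D x y t * dx lD x y t - lr x y t * dx rho x y t
    /\
    dt m2f x y t + dx (fun a b s => v1 a b s * m2f a b s) x y t
      + dy (fun a b s => v2 a b s * m2f a b s) x y t
      + m1f x y t * dy v1 x y t + m2f x y t * dy v2 x y t
    = D x y t * dy lD x y t - lr x y t * dy rho x y t
    /\
    (* delta l / delta zeta = 0 *)
    sigma2 * D x y t * rho x y t
      * (dt w x y t + v1 x y t * dx w x y t + v2 x y t * dy w x y t)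
    = - rhoref * D x y t * zeta x y t / Fr2
    /\
    (* advection of the areal density D d^2r *)
    dt D x y t + dx (fun a b s => D a b s * v1 a b s) x y t
      + dy (fun a b s => D a b s * v2 a b s) x y t = 0
    /\
    dt rho x y t + v1 x y t * dx rho x y t + v2 x y t * dy rho x y t = 0
    /\
    (* constraint enforced by the pressure multiplier *)
    D x y t = 1.

Definition is_flow (v1 v2 phi1 phi2 : field) : Prop :=
  forall X Y t,
    phi1 X Y 0 = X /\ phi2 X Y 0 = Y /\
    is_derive (fun s => phi1 X Y s) t (v1 (phi1 X Y t) (phi2 X Y t) t) /\
    is_derive (fun s => phi2 X Y s) t (v2 (phi1 X Y t) (phi2 X Y t) t).

Definition loop1 (phi1 : field) (c01 c02 : R -> R) (t s : R) : R := phi1 (c01 s) (c02 s) t.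
Definition loop2 (phi2 : field) (c01 c02 : R -> R) (t s : R) : R := phi2 (c01 s) (c02 s) t.

Definition circulation (sigma2 : R) (v1 v2 zeta phi1 phi2 : field) (c01 c02 : R -> R)
  (t : R) : R :=
  RInt (fun s =>
          let X := loop1 phi1 c01 c02 t s in
          let Y := loop2 phi2 c01 c02 t s in
          v1 X Y t * Derive (fun r => loop1 phi1 c01 c02 t r) s
          + v2 X Y t * Derive (fun r => loop2 phi2 c01 c02 t r) s
          + sigma2 * w_of v1 v2 zeta X Y t
              * Derive (fun r => zeta (loop1 phi1 c01 c02 t r) (loop2 phi2 c01 c02 t r) t) s)
       0 1.

Definition loop_int_inv_rho_d (rho q phi1 phi2 : field) (c01 c02 : R -> R) (t : R) : R :=
  RInt (fun s =>
          / rho (loop1 phi1 c01 c02 t s) (loop2 phi2 c01 c02 t s) t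
          * Derive (fun r => q (loop1 phi1 c01 c02 t r) (loop2 phi2 c01 c02 t r) t) s)
       0 1.

(* Write the circulation as the integral over s in [0, 1] of [u(c(t,s), t) · ∂_s c(t,s)], where
   [u = v + σ² w ∇ζ] is the momentum per unit mass.  Since [∂_t c = v(c)] and mixed partials of
   the flow map commute, [∂_t ∂_s c = ∂_s (v(c))], so the time derivative of the integrand is
   [(Du/Dt + (∇v)ᵀ u) · ∂_s c].  With [D = 1], the Euler-Poincaré momentum equations, together
   with [div v = 0] and the advection of [ρ], say that [Du/Dt + (∇v)ᵀ u = ∇K - ∇p̃ / ρ] with
   [K = (|v|² + σ² w²) / 2]; the [∇K] term integrates to zero around the closed loop.
   Everything is jointly continuous in (t, s), which justifies differentiating under the integral. *)

From Stdlib Require Import Reals Lra List FunctionalExtensionality.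
From Coquelicot Require Import Coquelicot.
Open Scope R_scope.

Lemma continuous_Rplus_fun {U : UniformSpace} (f g : U -> R) (z : U) :
  continuous f z -> continuous g z -> continuous (fun x => f x + g x) z.
Proof. exact (@continuous_plus U R_AbsRing R_NormedModule f g z). Qed.

Lemma continuous_Rmult_fun {U : UniformSpace} (f g : U -> R) (z : U) :
  continuous f z -> continuous g z -> continuous (fun x => f x * g x) z.
Proof. exact (@continuous_mult U R_AbsRing f g z). Qed.

Lemma continuous_Rinv_fun {U : UniformSpace} (f : U -> R) (z : U) :
  continuous f z -> f z <> 0 -> continuous (fun x => / f x) z.
Proof. intros Hf Hz. exact (continuous_comp f Rinv z Hf (continuous_Rinv _ Hz)). Qed.

Lemma continuous_pair {U V W : UniformSpace} (f : U -> V) (g : U -> W) (z : U) :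
  continuous f z -> continuous g z -> continuous (fun x => (f x, g x)) z.
Proof.
  intros Hf Hg. apply (continuous_comp_2 f g pair z Hf Hg).
  exact (continuous_ext (fun q => q) _ _ (@surjective_pairing V W) (continuous_id _)).
Qed.

Definition uncurry3 (f : field) (q : R * R * R) : R := f (fst (fst q)) (snd (fst q)) (snd q).

Lemma continuous_field_comp {U : UniformSpace} (f : field) (a b c : U -> R) (z : U) :
  continuous (uncurry3 f) (a z, b z, c z) ->
  continuous a z -> continuous b z -> continuous c z ->
  continuous (fun x => f (a x) (b x) (c x)) z.
Proof.
  intros Hf Ha Hb Hc.
  apply (continuous_comp (fun x => (a x, b x, c x)) (uncurry3 f) z); [|exact Hf].
  apply continuous_pair; [apply continuous_pair|]; assumption.
Qed.

Lemma ball_R_Rabs (x e y : R) : ball x e y <-> Rabs (y - x) < e.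
Proof. reflexivity. Qed.

Lemma is_derive_caratheodory (F phi : R -> R) (r0 : R) :
  (forall r, F r - F r0 = phi r * (r - r0)) -> continuous phi r0 ->
  is_derive F r0 (phi r0).
Proof.
  intros HF Hphi. apply is_derive_Reals. intros eps Heps.
  destruct (proj1 (filterlim_locally phi (phi r0)) Hphi (mkposreal eps Heps)) as [d Hd].
  exists d. intros h Hh Hhd.
  replace ((F (r0 + h) - F r0) / h) with (phi (r0 + h))
    by (rewrite HF; replace (r0 + h - r0) with h by ring; field; exact Hh).
  apply ball_R_Rabs, Hd, ball_R_Rabs. now replace (r0 + h - r0) with h by ring.
Qed.

Definition slope (a : R -> R) (r0 a' r : R) : R :=
  if Req_EM_T r r0 then a' else (a r - a r0) / (r - r0).

Lemma caratheodory_of_is_derive (a : R -> R) (r0 a' : R) : is_derive a r0 a' ->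
  (forall r, a r - a r0 = slope a r0 a' r * (r - r0)) /\
  continuous (slope a r0 a') r0 /\ slope a r0 a' r0 = a'.
Proof.
  intros Ha.
  assert (Hr0 : slope a r0 a' r0 = a') by (unfold slope; destruct (Req_EM_T r0 r0); congruence).
  split; [|split; [|exact Hr0]].
  - intros r. unfold slope. destruct (Req_EM_T r r0) as [->|Hr]; [ring|field; lra].
  - apply is_derive_Reals in Ha. apply filterlim_locally. intros eps.
    destruct (Ha eps (cond_pos eps)) as [d Hd]. exists d. intros r Hr. change R in r.
    apply ball_R_Rabs in Hr. apply ball_R_Rabs. rewrite Hr0. unfold slope.
    destruct (Req_EM_T r r0) as [->|Hne].
    + rewrite Rminus_eq_0, Rabs_R0. apply cond_pos.
    + specialize (Hd (r - r0)). replace (r0 + (r - r0)) with r in Hd by ring.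
      apply Hd; [lra|exact Hr].
Qed.

Lemma mean_value_increment (h dh : R -> R) (x0 x : R) :
  (forall z, is_derive h z (dh z)) ->
  exists xi, Rabs (xi - x0) <= Rabs (x - x0) /\ h x - h x0 = dh xi * (x - x0).
Proof.
  intros Hh.
  destruct (MVT_gen h x0 x dh) as [xi [Hxi Heq]].
  - intros z _. apply Hh.
  - intros z _. apply continuity_pt_filterlim, (ex_derive_continuous h).
    exists (dh z). apply Hh.
  - exists xi. split; [|exact Heq].
    unfold Rmin, Rmax in Hxi. destruct (Rle_dec x0 x);
      unfold Rabs; destruct (Rcase_abs (xi - x0)); destruct (Rcase_abs (x - x0)); lra.
Qed.

Lemma increment_quotient (G dG : R -> R -> R) (A : R -> R) (r0 : R) :
  (forall z r, is_derive (fun z => G z r) z (dG z r)) ->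
  continuous A r0 ->
  continuous (fun q : R * R => dG (fst q) (snd q)) (A r0, r0) ->
  exists q : R -> R,
    (forall r, G (A r) r - G (A r0) r = q r * (A r - A r0)) /\
    continuous q r0 /\ q r0 = dG (A r0) r0.
Proof.
  intros HG HA HdG.
  set (q r := if Req_EM_T (A r) (A r0) then dG (A r0) r
              else (G (A r) r - G (A r0) r) / (A r - A r0)).
  assert (Hq0 : q r0 = dG (A r0) r0)
    by (unfold q; destruct (Req_EM_T (A r0) (A r0)); congruence).
  assert (Hmvt : forall r, exists xi,
             Rabs (xi - A r0) <= Rabs (A r - A r0) /\ q r = dG xi r).
  { intros r. unfold q. destruct (Req_EM_T (A r) (A r0)) as [Heq|Hne].
    - exists (A r0). rewrite Heq. split; [lra|reflexivity].
    - destruct (mean_value_increment (fun z => G z r) (fun z => dG z r) (A r0) (A r))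
        as [xi [Hxi Heq]]; [intros z; apply HG|].
      exists xi. split; [exact Hxi|]. simpl in Heq. rewrite Heq. field. lra. }
  exists q. split; [|split; [|exact Hq0]].
  - intros r. unfold q. destruct (Req_EM_T (A r) (A r0)) as [->|Hne]; [ring|field; lra].
  - apply filterlim_locally. intros eps. rewrite Hq0.
    destruct (proj1 (filterlim_locally _ _) HdG eps) as [d Hd].
    assert (HAd := proj1 (filterlim_locally A (A r0)) HA d).
    eapply filter_imp; [|apply filter_and; [exact HAd|apply (locally_ball r0 d)]].
    intros r [HAr Hr]. destruct (Hmvt r) as [xi [Hxi ->]].
    apply (Hd (xi, r)). split; [|exact Hr].
    change (Rabs (A r - A r0) < d) in HAr. apply ball_R_Rabs. cbn [fst snd]. lra.
Qed.

Definition differentiable3 (f : field) : Prop := forall i x y t, ex_pd i f x y t.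

Lemma is_derive_field_comp (f : field) (a b c : R -> R) (r0 a' b' c' : R) :
  differentiable3 f ->
  (forall i, continuous (uncurry3 (pd i f)) (a r0, b r0, c r0)) ->
  is_derive a r0 a' -> is_derive b r0 b' -> is_derive c r0 c' ->
  is_derive (fun r => f (a r) (b r) (c r)) r0
    (dx f (a r0) (b r0) (c r0) * a' + dy f (a r0) (b r0) (c r0) * b'
     + dt f (a r0) (b r0) (c r0) * c').
Proof.
  intros Hf Hpd Ha Hb Hc.
  assert (Ca : continuous a r0) by (apply (ex_derive_continuous a); exists a'; exact Ha).
  assert (Cb : continuous b r0) by (apply (ex_derive_continuous b); exists b'; exact Hb).
  assert (Cc : continuous c r0) by (apply (ex_derive_continuous c); exists c'; exact Hc).
  assert (Csnd : forall h : R -> R, continuous h r0 -> forall z,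
             continuous (fun q : R * R => h (snd q)) (z, r0)).
  { intros h Hh z. exact (continuous_comp snd h (z, r0) (continuous_snd z r0) Hh). }
  assert (Cfst : forall z, continuous (fun q : R * R => fst q) (z, r0))
    by (intros z; apply continuous_fst).
  (* [f(a r, b r, c r) - f(a r0, b r0, c r0)] telescopes through [f(a r0, b r, c r)] and
     [f(a r0, b r0, c r)] into three one-variable increments. *)
  destruct (increment_quotient (fun z r => f z (b r) (c r))
              (fun z r => dx f z (b r) (c r)) a r0) as [q1 [E1 [C1 V1]]].
  { intros z r. apply Derive_correct, (Hf 0%nat). }
  { exact Ca. }
  { apply (continuous_field_comp (dx f)); [apply (Hpd 0%nat)|apply Cfst|apply Csnd..]; assumption. }
  destruct (increment_quotient (fun z r => f (a r0) z (c r))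
              (fun z r => dy f (a r0) z (c r)) b r0) as [q2 [E2 [C2 V2]]].
  { intros z r. apply Derive_correct, (Hf 1%nat). }
  { exact Cb. }
  { apply (continuous_field_comp (dy f));
      [apply (Hpd 1%nat)|apply continuous_const|apply Cfst|apply Csnd; exact Cc]. }
  destruct (increment_quotient (fun z r => f (a r0) (b r0) z)
              (fun z r => dt f (a r0) (b r0) z) c r0) as [q3 [E3 [C3 V3]]].
  { intros z r. apply Derive_correct, (Hf 2%nat). }
  { exact Cc. }
  { apply (continuous_field_comp (dt f)); [apply (Hpd 2%nat)|apply continuous_const..|apply Cfst]. }
  destruct (caratheodory_of_is_derive a r0 a' Ha) as [Sa [CSa VSa]].
  destruct (caratheodory_of_is_derive b r0 b' Hb) as [Sb [CSb VSb]].
  destruct (caratheodory_of_is_derive c r0 c' Hc) as [Sc [CSc VSc]].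
  simpl in E1, E2, E3, V1, V2, V3.
  set (phi r := q1 r * slope a r0 a' r + q2 r * slope b r0 b' r + q3 r * slope c r0 c' r).
  replace (dx f (a r0) (b r0) (c r0) * a' + dy f (a r0) (b r0) (c r0) * b'
           + dt f (a r0) (b r0) (c r0) * c') with (phi r0)
    by (unfold phi; rewrite V1, V2, V3, VSa, VSb, VSc; reflexivity).
  apply is_derive_caratheodory.
  - intros r. specialize (E1 r). specialize (E2 r). specialize (E3 r).
    rewrite Sa in E1. rewrite Sb in E2. rewrite Sc in E3. unfold phi. lra.
  - unfold phi. repeat apply continuous_Rplus_fun; apply continuous_Rmult_fun; assumption.
Qed.

Definition cont3 (f : field) : Prop := forall x y t, continuous (uncurry3 f) (x, y, t).

Definition C1 (f : field) : Prop := cont3 f /\ differentiable3 f /\ forall i, cont3 (pd i f).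

Lemma pd_plus i f g x y t : ex_pd i f x y t -> ex_pd i g x y t ->
  pd i (fun a b c => f a b c + g a b c) x y t = pd i f x y t + pd i g x y t.
Proof. destruct i as [|[|i]]; apply Derive_plus. Qed.

Lemma pd_minus i f g x y t : ex_pd i f x y t -> ex_pd i g x y t ->
  pd i (fun a b c => f a b c - g a b c) x y t = pd i f x y t - pd i g x y t.
Proof. destruct i as [|[|i]]; apply Derive_minus. Qed.

Lemma pd_mult i f g x y t : ex_pd i f x y t -> ex_pd i g x y t ->
  pd i (fun a b c => f a b c * g a b c) x y t = pd i f x y t * g x y t + f x y t * pd i g x y t.
Proof. destruct i as [|[|i]]; apply Derive_mult. Qed.

Lemma pd_const i c x y t : pd i (fun _ _ _ => c) x y t = 0.
Proof. destruct i as [|[|i]]; apply (Derive_const c). Qed.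

Lemma differentiable3_plus f g : differentiable3 f -> differentiable3 g ->
  differentiable3 (fun x y t => f x y t + g x y t).
Proof.
  intros Hf Hg i x y t. specialize (Hf i x y t). specialize (Hg i x y t).
  destruct i as [|[|i]]; exact (ex_derive_plus _ _ _ Hf Hg).
Qed.

Lemma differentiable3_mult f g : differentiable3 f -> differentiable3 g ->
  differentiable3 (fun x y t => f x y t * g x y t).
Proof.
  intros Hf Hg i x y t. specialize (Hf i x y t). specialize (Hg i x y t).
  destruct i as [|[|i]]; exact (ex_derive_mult _ _ _ Hf Hg).
Qed.

Lemma differentiable3_const c : differentiable3 (fun _ _ _ => c).
Proof. intros [|[|i]] x y t; apply (ex_derive_const (V := R_NormedModule) c). Qed.

Lemma cont3_plus f g : cont3 f -> cont3 g -> cont3 (fun x y t => f x y t + g x y t).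
Proof. intros Hf Hg x y t. apply continuous_Rplus_fun; [apply Hf|apply Hg]. Qed.

Lemma cont3_mult f g : cont3 f -> cont3 g -> cont3 (fun x y t => f x y t * g x y t).
Proof. intros Hf Hg x y t. apply continuous_Rmult_fun; [apply Hf|apply Hg]. Qed.

Lemma cont3_const c : cont3 (fun _ _ _ => c).
Proof. intros x y t. apply continuous_const. Qed.

Lemma C1_plus f g : C1 f -> C1 g -> C1 (fun x y t => f x y t + g x y t).
Proof.
  intros [Cf [Df Pf]] [Cg [Dg Pg]].
  split; [|split]; [apply cont3_plus; assumption|apply differentiable3_plus; assumption|].
  intros i x y t. apply (continuous_ext (uncurry3 (fun x y t => pd i f x y t + pd i g x y t))).
  - intros q. symmetry. apply pd_plus; [apply Df|apply Dg].
  - apply cont3_plus; [apply Pf|apply Pg].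
Qed.

Lemma C1_mult f g : C1 f -> C1 g -> C1 (fun x y t => f x y t * g x y t).
Proof.
  intros [Cf [Df Pf]] [Cg [Dg Pg]].
  split; [|split]; [apply cont3_mult; assumption|apply differentiable3_mult; assumption|].
  intros i x y t.
  apply (continuous_ext (uncurry3 (fun x y t => pd i f x y t * g x y t + f x y t * pd i g x y t))).
  - intros q. symmetry. apply pd_mult; [apply Df|apply Dg].
  - apply cont3_plus; apply cont3_mult; auto.
Qed.

Lemma C1_const c : C1 (fun _ _ _ => c).
Proof.
  split; [|split]; [apply cont3_const|apply differentiable3_const|].
  intros i x y t. apply (continuous_ext (uncurry3 (fun _ _ _ => 0))).
  - intros q. symmetry. apply pd_const.
  - apply cont3_const.
Qed.

Lemma C1_pow f n : C1 f -> C1 (fun x y t => f x y t ^ n).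
Proof.
  intros Hf. induction n as [|n IH]; [apply C1_const|].
  exact (C1_mult f (fun x y t => f x y t ^ n) Hf IH).
Qed.

Lemma C1_cont3 f : C1 f -> cont3 f.
Proof. intros [Cf _]. exact Cf. Qed.

Lemma C1_differentiable3 f : C1 f -> differentiable3 f.
Proof. intros [_ [Df _]]. exact Df. Qed.

Lemma iter_pd_app l i f : iter_pd l (pd i f) = iter_pd (l ++ i :: nil) f.
Proof. induction l as [|j l IH]; simpl; congruence. Qed.

Lemma smooth3_pd i f : smooth3 f -> smooth3 (pd i f).
Proof. intros H l x y t. rewrite iter_pd_app. apply H. Qed.

Lemma smooth3_C1 f : smooth3 f -> C1 f.
Proof.
  intros H. split; [|split].
  - intros x y t. exact (proj2 (H nil x y t)).
  - intros i x y t. exact (proj1 (H nil x y t) i).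
  - intros i x y t. exact (proj2 (H (i :: nil) x y t)).
Qed.

Lemma smooth3_cont3 l f : smooth3 f -> cont3 (iter_pd l f).
Proof. intros H x y t. exact (proj2 (H l x y t)). Qed.

Lemma smooth3_dt_dx phi X Y t : smooth3 phi -> dt (dx phi) X Y t = dx (dt phi) X Y t.
Proof.
  intros H. symmetry. apply (Schwarz (fun u v => phi u Y v) X t).
  - exists (mkposreal 1 Rlt_0_1). intros u v _ _. repeat split.
    + exact (proj1 (H nil u Y v) 0%nat).
    + exact (proj1 (H nil u Y v) 2%nat).
    + exact (proj1 (H (2%nat :: nil) u Y v) 0%nat).
    + exact (proj1 (H (0%nat :: nil) u Y v) 2%nat).
  - apply continuity_2d_pt_filterlim, (continuous_field_comp (iter_pd (0 :: 2 :: nil)%nat phi));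
      [apply (smooth3_cont3 _ _ H)|apply continuous_fst|apply continuous_const
      |apply continuous_snd].
  - apply continuity_2d_pt_filterlim, (continuous_field_comp (iter_pd (2 :: 0 :: nil)%nat phi));
      [apply (smooth3_cont3 _ _ H)|apply continuous_fst|apply continuous_const
      |apply continuous_snd].
Qed.

Lemma smooth3_dt_dy phi X Y t : smooth3 phi -> dt (dy phi) X Y t = dy (dt phi) X Y t.
Proof.
  intros H. symmetry. apply (Schwarz (fun u v => phi X u v) Y t).
  - exists (mkposreal 1 Rlt_0_1). intros u v _ _. repeat split.
    + exact (proj1 (H nil X u v) 1%nat).
    + exact (proj1 (H nil X u v) 2%nat).
    + exact (proj1 (H (2%nat :: nil) X u v) 1%nat).
    + exact (proj1 (H (1%nat :: nil) X u v) 2%nat).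
  - apply continuity_2d_pt_filterlim, (continuous_field_comp (iter_pd (1 :: 2 :: nil)%nat phi));
      [apply (smooth3_cont3 _ _ H)|apply continuous_const|apply continuous_fst
      |apply continuous_snd].
  - apply continuity_2d_pt_filterlim, (continuous_field_comp (iter_pd (2 :: 1 :: nil)%nat phi));
      [apply (smooth3_cont3 _ _ H)|apply continuous_const|apply continuous_fst
      |apply continuous_snd].
Qed.

Lemma is_derive_value (f : R -> R) (x l l' : R) : is_derive f x l -> l = l' -> is_derive f x l'.
Proof. now intros H <-. Qed.

Lemma is_derive_Rplus (f g : R -> R) (t df dg : R) :
  is_derive f t df -> is_derive g t dg -> is_derive (fun u => f u + g u) t (df + dg).
Proof. exact (is_derive_plus f g t df dg). Qed.

Lemma is_derive_Rmult (f g : R -> R) (t df dg : R) :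
  is_derive f t df -> is_derive g t dg ->
  is_derive (fun u => f u * g u) t (df * g t + f t * dg).
Proof. intros Hf Hg. apply (is_derive_mult f g t df dg Hf Hg). exact Rmult_comm. Qed.

Lemma is_derive_C1_comp (f : field) (a b c : R -> R) (r0 a' b' c' : R) : C1 f ->
  is_derive a r0 a' -> is_derive b r0 b' -> is_derive c r0 c' ->
  is_derive (fun r => f (a r) (b r) (c r)) r0
    (dx f (a r0) (b r0) (c r0) * a' + dy f (a r0) (b r0) (c r0) * b'
     + dt f (a r0) (b r0) (c r0) * c').
Proof. intros [_ [Df Pf]]. apply is_derive_field_comp; [exact Df|intros i; apply Pf]. Qed.

Lemma smooth1_is_derive (c : R -> R) (s : R) : smooth1 c -> is_derive c s (Derive c s).
Proof. intros H. apply Derive_correct, (H 1%nat). Qed.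

Lemma smooth1_continuous (c : R -> R) (s : R) : smooth1 c -> continuous c s.
Proof. intros H. apply (ex_derive_continuous c), (H 1%nat). Qed.

Lemma smooth1_continuous_Derive (c : R -> R) (s : R) : smooth1 c -> continuous (Derive c) s.
Proof. intros H. apply (ex_derive_continuous (Derive c)), (H 2%nat). Qed.

Definition continuous2 (H : R -> R -> R) : Prop :=
  forall t s, continuous (fun z : R * R => H (fst z) (snd z)) (t, s).

Lemma continuous2_plus (H K : R -> R -> R) : continuous2 H -> continuous2 K ->
  continuous2 (fun t s => H t s + K t s).
Proof. intros CH CK t s. apply continuous_Rplus_fun; [apply CH|apply CK]. Qed.

Lemma continuous2_mult (H K : R -> R -> R) : continuous2 H -> continuous2 K ->
  continuous2 (fun t s => H t s * K t s).
Proof. intros CH CK t s. apply continuous_Rmult_fun; [apply CH|apply CK]. Qed.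

Lemma continuous2_slice (H : R -> R -> R) (t s : R) :
  continuous2 H -> continuous (fun s => H t s) s.
Proof.
  intros CH. apply (continuous_comp (fun s => (t, s)) (fun z : R * R => H (fst z) (snd z))).
  - apply continuous_pair; [apply continuous_const|apply continuous_id].
  - apply CH.
Qed.

Lemma continuous2_continuity_2d_pt (H : R -> R -> R) (t s : R) :
  continuous2 H -> continuity_2d_pt H t s.
Proof. intros CH. apply continuity_2d_pt_filterlim, CH. Qed.

Lemma continuous2_time : continuous2 (fun t _ => t).
Proof. intros t s. apply continuous_fst. Qed.

Lemma continuous2_of_loop (h : R -> R) : (forall s, continuous h s) -> continuous2 (fun _ s => h s).
Proof. intros Ch t s. exact (continuous_comp snd h (t, s) (continuous_snd t s) (Ch s)). Qed.

Lemma continuous2_field_comp (f : field) (A B C : R -> R -> R) : cont3 f ->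
  continuous2 A -> continuous2 B -> continuous2 C ->
  continuous2 (fun t s => f (A t s) (B t s) (C t s)).
Proof.
  intros Cf CA CB CC t s. apply continuous_field_comp; [apply Cf|apply CA|apply CB|apply CC].
Qed.

Lemma continuous2_minus (H K : R -> R -> R) : continuous2 H -> continuous2 K ->
  continuous2 (fun t s => H t s - K t s).
Proof.
  intros CH CK t s. exact (@continuous_minus _ R_AbsRing R_NormedModule _ _ _ (CH t s) (CK t s)).
Qed.

Lemma continuous2_inv (H : R -> R -> R) : continuous2 H -> (forall t s, H t s <> 0) ->
  continuous2 (fun t s => / H t s).
Proof. intros CH HH t s. apply continuous_Rinv_fun; [apply CH|apply HH]. Qed.

Definition material (v1 v2 g : field) : field :=
  fun x y t => dt g x y t + v1 x y t * dx g x y t + v2 x y t * dy g x y t.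

(* [m1 = D ρ mom1] definitionally, and the circulation integrand [v · dr + σ² w dζ] is
   [mom1 dx + mom2 dy] along the loop. *)
Definition mom1 (sigma2 : R) (v1 v2 zeta : field) : field :=
  fun x y t => v1 x y t + sigma2 * w_of v1 v2 zeta x y t * dx zeta x y t.

Definition mom2 (sigma2 : R) (v1 v2 zeta : field) : field :=
  fun x y t => v2 x y t + sigma2 * w_of v1 v2 zeta x y t * dy zeta x y t.

Definition kinetic (sigma2 : R) (v1 v2 zeta : field) : field :=
  fun x y t => / 2 * ((v1 x y t) ^ 2 + (v2 x y t) ^ 2 + sigma2 * (w_of v1 v2 zeta x y t) ^ 2).

Lemma momentum_advective_form i (v1 v2 rho u u1 u2 K q : field) (x y t : R) :
  differentiable3 v1 -> differentiable3 v2 -> differentiable3 rho ->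
  differentiable3 u -> differentiable3 K -> differentiable3 q ->
  dx v1 x y t + dy v2 x y t = 0 ->
  material v1 v2 rho x y t = 0 ->
  rho x y t <> 0 ->
  dt (fun a b c => rho a b c * u a b c) x y t
  + dx (fun a b c => v1 a b c * (rho a b c * u a b c)) x y t
  + dy (fun a b c => v2 a b c * (rho a b c * u a b c)) x y t
  + rho x y t * u1 x y t * pd i v1 x y t + rho x y t * u2 x y t * pd i v2 x y t
  = pd i (fun a b c => rho a b c * K a b c - q a b c) x y t - K x y t * pd i rho x y t ->
  material v1 v2 u x y t + u1 x y t * pd i v1 x y t + u2 x y t * pd i v2 x y t
  = pd i K x y t - pd i q x y t / rho x y t.
Proof.
  intros Dv1 Dv2 Drho Du DK Dq Hdiv Hadv Hrho Hcons.
  assert (Dru : differentiable3 (fun a b c => rho a b c * u a b c))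
    by (apply differentiable3_mult; assumption).
  assert (DrK : differentiable3 (fun a b c => rho a b c * K a b c))
    by (apply differentiable3_mult; assumption).
  rewrite (pd_mult 2 rho u), (pd_mult 0 v1), (pd_mult 0 rho u), (pd_mult 1 v2),
    (pd_mult 1 rho u), (pd_minus i), (pd_mult i rho K) in Hcons by auto.
  unfold material in *. cbn [pd] in Hcons.
  apply (Rmult_eq_reg_l (rho x y t)); [|exact Hrho].
  replace (rho x y t * (pd i K x y t - pd i q x y t / rho x y t))
    with (rho x y t * pd i K x y t - pd i q x y t) by (field; exact Hrho).
  (* The conservative form exceeds [ρ] times the advective form by [u] times the advection
     of [ρ] plus [ρ u] times the divergence of [v]. *)
  assert (Hadv_u : u x y t * (dt rho x y t + v1 x y t * dx rho x y t + v2 x y t * dy rho x y t) = 0)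
    by (rewrite Hadv; ring).
  assert (Hdiv_u : rho x y t * u x y t * (dx v1 x y t + dy v2 x y t) = 0) by (rewrite Hdiv; ring).
  lra.
Qed.


Section Flow.

Variables (v1 v2 phi1 phi2 : field) (c01 c02 : R -> R).
Hypotheses (Hv1 : smooth3 v1) (Hv2 : smooth3 v2) (Hphi1 : smooth3 phi1) (Hphi2 : smooth3 phi2)
  (Hflow : is_flow v1 v2 phi1 phi2) (Hc01 : smooth1 c01) (Hc02 : smooth1 c02)
  (Hclosed : c01 0 = c01 1 /\ c02 0 = c02 1).

Definition along (g : field) (t s : R) : R :=
  g (loop1 phi1 c01 c02 t s) (loop2 phi2 c01 c02 t s) t.

Definition tangent (phi : field) (t s : R) : R :=
  dx phi (c01 s) (c02 s) t * Derive c01 s + dy phi (c01 s) (c02 s) t * Derive c02 s.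

Definition loop_grad (g : field) (t s : R) : R :=
  along (dx g) t s * tangent phi1 t s + along (dy g) t s * tangent phi2 t s.

Lemma is_derive_tangent (phi : field) (t s : R) : C1 phi ->
  is_derive (fun r => phi (c01 r) (c02 r) t) s (tangent phi t s).
Proof.
  intros Cphi. eapply is_derive_value.
  - apply (is_derive_C1_comp phi c01 c02 (fun _ => t));
      [exact Cphi|apply smooth1_is_derive, Hc01|apply smooth1_is_derive, Hc02
      |apply is_derive_const].
  - unfold tangent. rewrite Rmult_0_r. ring.
Qed.

Lemma is_derive_along_s (g : field) (t s : R) : C1 g ->
  is_derive (fun r => along g t r) s (loop_grad g t s).
Proof.
  intros Cg. eapply is_derive_value.
  - apply (is_derive_C1_comp g (fun r => phi1 (c01 r) (c02 r) t)
             (fun r => phi2 (c01 r) (c02 r) t) (fun _ => t));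
      [exact Cg|apply is_derive_tangent, smooth3_C1; assumption..|apply is_derive_const].
  - unfold loop_grad, along, loop1, loop2. rewrite Rmult_0_r. ring.
Qed.

Lemma is_derive_along_t (g : field) (t s : R) : C1 g ->
  is_derive (fun u => along g u s) t (along (material v1 v2 g) t s).
Proof.
  intros Cg. destruct (Hflow (c01 s) (c02 s) t) as [_ [_ [D1 D2]]]. eapply is_derive_value.
  - apply (is_derive_C1_comp g (fun u => phi1 (c01 s) (c02 s) u)
             (fun u => phi2 (c01 s) (c02 s) u) (fun u => u));
      [exact Cg|exact D1|exact D2|apply is_derive_id].
  - unfold along, material, loop1, loop2. rewrite Rmult_1_r. ring.
Qed.

Lemma dt_dx_flow (phi v : field) (X Y t : R) : smooth3 phi -> C1 v ->
  (forall X Y u, is_derive (fun u => phi X Y u) u (v (phi1 X Y u) (phi2 X Y u) u)) ->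
  dt (dx phi) X Y t = dx v (phi1 X Y t) (phi2 X Y t) t * dx phi1 X Y t
                      + dy v (phi1 X Y t) (phi2 X Y t) t * dx phi2 X Y t.
Proof.
  intros Sphi Cv Hdphi. rewrite smooth3_dt_dx by exact Sphi.
  unfold dx at 1. rewrite (Derive_ext _ (fun a => v (phi1 a Y t) (phi2 a Y t) t))
    by (intros a; apply is_derive_unique, Hdphi).
  apply is_derive_unique. eapply is_derive_value.
  - apply (is_derive_C1_comp v (fun a => phi1 a Y t) (fun a => phi2 a Y t) (fun _ => t));
      [exact Cv|apply Derive_correct, (proj1 (Hphi1 nil X Y t) 0%nat)
      |apply Derive_correct, (proj1 (Hphi2 nil X Y t) 0%nat)|apply is_derive_const].
  - rewrite Rmult_0_r, Rplus_0_r. reflexivity.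
Qed.

Lemma dt_dy_flow (phi v : field) (X Y t : R) : smooth3 phi -> C1 v ->
  (forall X Y u, is_derive (fun u => phi X Y u) u (v (phi1 X Y u) (phi2 X Y u) u)) ->
  dt (dy phi) X Y t = dx v (phi1 X Y t) (phi2 X Y t) t * dy phi1 X Y t
                      + dy v (phi1 X Y t) (phi2 X Y t) t * dy phi2 X Y t.
Proof.
  intros Sphi Cv Hdphi. rewrite smooth3_dt_dy by exact Sphi.
  unfold dy at 1. rewrite (Derive_ext _ (fun b => v (phi1 X b t) (phi2 X b t) t))
    by (intros b; apply is_derive_unique, Hdphi).
  apply is_derive_unique. eapply is_derive_value.
  - apply (is_derive_C1_comp v (fun b => phi1 X b t) (fun b => phi2 X b t) (fun _ => t));
      [exact Cv|apply Derive_correct, (proj1 (Hphi1 nil X Y t) 1%nat)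
      |apply Derive_correct, (proj1 (Hphi2 nil X Y t) 1%nat)|apply is_derive_const].
  - rewrite Rmult_0_r, Rplus_0_r. reflexivity.
Qed.

Lemma is_derive_tangent_t (phi v : field) (t s : R) : smooth3 phi -> C1 v ->
  (forall X Y u, is_derive (fun u => phi X Y u) u (v (phi1 X Y u) (phi2 X Y u) u)) ->
  is_derive (fun u => tangent phi u s) t (loop_grad v t s).
Proof.
  intros Sphi Cv Hdphi. unfold tangent. eapply is_derive_value.
  - apply is_derive_Rplus; apply is_derive_Rmult.
    + apply Derive_correct, (proj1 (Sphi (0 :: nil)%nat (c01 s) (c02 s) t) 2%nat).
    + apply is_derive_const.
    + apply Derive_correct, (proj1 (Sphi (1 :: nil)%nat (c01 s) (c02 s) t) 2%nat).
    + apply is_derive_const.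
  - change (Derive (dx phi (c01 s) (c02 s)) t) with (dt (dx phi) (c01 s) (c02 s) t).
    change (Derive (dy phi (c01 s) (c02 s)) t) with (dt (dy phi) (c01 s) (c02 s) t).
    rewrite (dt_dx_flow phi v), (dt_dy_flow phi v) by assumption.
    unfold loop_grad, along, tangent, loop1, loop2. rewrite !Rmult_0_r. ring.
Qed.

Lemma continuous2_loop_point (phi : field) : cont3 phi ->
  continuous2 (fun t s => phi (c01 s) (c02 s) t).
Proof.
  intros Cphi.
  apply continuous2_field_comp; [exact Cphi|apply continuous2_of_loop..|apply continuous2_time];
    intros s; apply smooth1_continuous; assumption.
Qed.

Lemma continuous2_along (g : field) : cont3 g -> continuous2 (along g).
Proof.
  intros Cg. apply continuous2_field_comp; [exact Cg| | |apply continuous2_time];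
    apply continuous2_loop_point, (smooth3_cont3 nil); assumption.
Qed.

Lemma continuous2_tangent (phi : field) : C1 phi -> continuous2 (tangent phi).
Proof.
  intros [_ [_ Pphi]]. unfold tangent.
  apply continuous2_plus; apply continuous2_mult;
    [apply continuous2_loop_point, (Pphi 0%nat)|apply continuous2_of_loop
    |apply continuous2_loop_point, (Pphi 1%nat)|apply continuous2_of_loop];
    intros s; apply smooth1_continuous_Derive; assumption.
Qed.

Lemma continuous2_loop_grad (g : field) : C1 g -> continuous2 (loop_grad g).
Proof.
  intros [_ [_ Pg]]. unfold loop_grad.
  apply continuous2_plus; apply continuous2_mult;
    [apply continuous2_along, (Pg 0%nat)|apply continuous2_tangent, smooth3_C1, Hphi1
    |apply continuous2_along, (Pg 1%nat)|apply continuous2_tangent, smooth3_C1, Hphi2].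
Qed.

Lemma is_RInt_loop_grad_closed g t : C1 g -> is_RInt (loop_grad g t) 0 1 0.
Proof.
  intros Cg.
  assert (Hend : along g t 1 = along g t 0)
    by (unfold along, loop1, loop2; rewrite (proj1 Hclosed), (proj2 Hclosed); reflexivity).
  assert (H := is_RInt_derive (along g t) (loop_grad g t) 0 1).
  rewrite Hend, minus_eq_zero in H. apply H.
  - intros s _. apply is_derive_along_s, Cg.
  - intros s _. apply (continuous2_slice (loop_grad g)), continuous2_loop_grad, Cg.
Qed.

Section Kelvin.

Variables (sigma2 rhoref Fr2 : R) (zeta rho D p : field).
Hypotheses (Hzeta : smooth3 zeta) (Hrho : smooth3 rho) (Hp : smooth3 p)
  (Hrho_pos : forall x y t, 0 < rho x y t)
  (HEP : EP_equations sigma2 rhoref Fr2 v1 v2 zeta rho D p).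

Local Notation u1 := (mom1 sigma2 v1 v2 zeta).
Local Notation u2 := (mom2 sigma2 v1 v2 zeta).
Local Notation K := (kinetic sigma2 v1 v2 zeta).
Local Notation pt := (ptilde rhoref Fr2 p zeta).

Lemma C1_w : C1 (w_of v1 v2 zeta).
Proof.
  pose proof (smooth3_C1 _ Hv1). pose proof (smooth3_C1 _ Hv2).
  pose proof (smooth3_C1 _ (smooth3_pd 0 _ Hzeta)).
  pose proof (smooth3_C1 _ (smooth3_pd 1 _ Hzeta)).
  pose proof (smooth3_C1 _ (smooth3_pd 2 _ Hzeta)).
  unfold w_of. repeat apply C1_plus; try apply C1_mult; assumption.
Qed.

Lemma C1_mom1 : C1 u1.
Proof.
  unfold mom1. apply C1_plus; [apply smooth3_C1, Hv1|].
  repeat apply C1_mult; [apply C1_const|apply C1_w|apply smooth3_C1, (smooth3_pd 0), Hzeta].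
Qed.

Lemma C1_mom2 : C1 u2.
Proof.
  unfold mom2. apply C1_plus; [apply smooth3_C1, Hv2|].
  repeat apply C1_mult; [apply C1_const|apply C1_w|apply smooth3_C1, (smooth3_pd 1), Hzeta].
Qed.

Lemma C1_kinetic : C1 K.
Proof.
  unfold kinetic. apply C1_mult; [apply C1_const|].
  apply C1_plus; [apply C1_plus|apply C1_mult; [apply C1_const|]]; apply C1_pow;
    [apply smooth3_C1, Hv1|apply smooth3_C1, Hv2|apply C1_w].
Qed.

Lemma C1_ptilde : C1 pt.
Proof.
  unfold ptilde, Rdiv. apply C1_plus; [apply smooth3_C1, Hp|].
  apply C1_mult; [apply C1_mult; [apply C1_const|apply C1_pow, smooth3_C1, Hzeta]|apply C1_const].
Qed.

Lemma EP_D_eq_one : D = fun _ _ _ => 1.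
Proof.
  apply functional_extensionality; intros x; apply functional_extensionality; intros y;
    apply functional_extensionality; intros t.
  destruct (HEP x y t) as [_ [_ [_ [_ [_ HD]]]]]. exact HD.
Qed.

Lemma EP_div_free x y t : dx v1 x y t + dy v2 x y t = 0.
Proof.
  destruct (HEP x y t) as [_ [_ [_ [HD _]]]]. rewrite EP_D_eq_one in HD. cbv beta in HD.
  rewrite (pd_const 2 1) in HD.
  unfold dx, dy in HD.
  rewrite (Derive_ext (fun a => 1 * v1 a y t) (fun a => v1 a y t)),
    (Derive_ext (fun b => 1 * v2 x b t) (fun b => v2 x b t)) in HD by (intros; apply Rmult_1_l).
  unfold dx, dy. lra.
Qed.

Lemma m1_unit_density :
  m1 sigma2 v1 v2 zeta rho (fun _ _ _ => 1) = fun x y t => rho x y t * u1 x y t.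
Proof. unfold m1, mom1. do 3 (apply functional_extensionality; intro). ring. Qed.

Lemma m2_unit_density :
  m2 sigma2 v1 v2 zeta rho (fun _ _ _ => 1) = fun x y t => rho x y t * u2 x y t.
Proof. unfold m2, mom2. do 3 (apply functional_extensionality; intro). ring. Qed.

Lemma dl_dD_eq :
  dl_dD sigma2 rhoref Fr2 v1 v2 zeta rho p = fun x y t => rho x y t * K x y t - pt x y t.
Proof. unfold dl_dD, kinetic, ptilde. do 3 (apply functional_extensionality; intro). ring. Qed.

Lemma dl_drho_unit_density : dl_drho sigma2 v1 v2 zeta (fun _ _ _ => 1) = K.
Proof. unfold dl_drho, kinetic. do 3 (apply functional_extensionality; intro). ring. Qed.

Lemma EP_momentum1 x y t :
  material v1 v2 u1 x y t + u1 x y t * dx v1 x y t + u2 x y t * dx v2 x y t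
  = dx K x y t - dx pt x y t / rho x y t.
Proof.
  destruct (HEP x y t) as [H1 [_ [_ [_ [Hadv _]]]]].
  rewrite EP_D_eq_one, m1_unit_density, m2_unit_density, dl_dD_eq, dl_drho_unit_density in H1.
  cbv beta in H1. rewrite Rmult_1_l in H1.
  apply (momentum_advective_form 0 v1 v2 rho u1 u1 u2 K pt x y t);
    [apply C1_differentiable3; auto using smooth3_C1, C1_mom1, C1_kinetic, C1_ptilde..
    |apply EP_div_free|exact Hadv|apply Rgt_not_eq, Hrho_pos|exact H1].
Qed.

Lemma EP_momentum2 x y t :
  material v1 v2 u2 x y t + u1 x y t * dy v1 x y t + u2 x y t * dy v2 x y t
  = dy K x y t - dy pt x y t / rho x y t.
Proof.
  destruct (HEP x y t) as [_ [H2 [_ [_ [Hadv _]]]]].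
  rewrite EP_D_eq_one, m1_unit_density, m2_unit_density, dl_dD_eq, dl_drho_unit_density in H2.
  cbv beta in H2. rewrite Rmult_1_l in H2.
  apply (momentum_advective_form 1 v1 v2 rho u2 u1 u2 K pt x y t);
    [apply C1_differentiable3; auto using smooth3_C1, C1_mom2, C1_kinetic, C1_ptilde..
    |apply EP_div_free|exact Hadv|apply Rgt_not_eq, Hrho_pos|exact H2].
Qed.

Definition circ_density (t s : R) : R :=
  along u1 t s * tangent phi1 t s + along u2 t s * tangent phi2 t s.

Lemma circulation_eq t :
  circulation sigma2 v1 v2 zeta phi1 phi2 c01 c02 t = RInt (circ_density t) 0 1.
Proof.
  unfold circulation, loop1, loop2. apply RInt_ext. intros s _. cbv beta zeta.
  assert (E1 : Derive (fun r => phi1 (c01 r) (c02 r) t) s = tangent phi1 t s)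
    by (apply is_derive_unique, is_derive_tangent, smooth3_C1, Hphi1).
  assert (E2 : Derive (fun r => phi2 (c01 r) (c02 r) t) s = tangent phi2 t s)
    by (apply is_derive_unique, is_derive_tangent, smooth3_C1, Hphi2).
  assert (E3 : Derive (fun r => zeta (phi1 (c01 r) (c02 r) t) (phi2 (c01 r) (c02 r) t) t) s
               = loop_grad zeta t s)
    by (apply is_derive_unique, is_derive_along_s, smooth3_C1, Hzeta).
  (* [RInt_ext] states the equation in the carrier of [R_CompleteNormedModule], unknown to [ring]. *)
  rewrite E1, E2, E3. match goal with |- ?a = ?b => change (@eq R a b) end.
  unfold circ_density, loop_grad, along, loop1, loop2, mom1, mom2. ring.
Qed.

Lemma is_derive_circ_density t s :
  is_derive (fun u => circ_density u s) t (loop_grad K t s - / along rho t s * loop_grad pt t s).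
Proof.
  assert (Hdphi1 : forall X Y u, is_derive (fun u => phi1 X Y u) u (v1 (phi1 X Y u) (phi2 X Y u) u))
    by (intros X Y u; apply Hflow).
  assert (Hdphi2 : forall X Y u, is_derive (fun u => phi2 X Y u) u (v2 (phi1 X Y u) (phi2 X Y u) u))
    by (intros X Y u; apply Hflow).
  unfold circ_density. eapply is_derive_value.
  - apply is_derive_Rplus; apply is_derive_Rmult;
      [apply is_derive_along_t, C1_mom1|apply (is_derive_tangent_t phi1 v1)
      |apply is_derive_along_t, C1_mom2|apply (is_derive_tangent_t phi2 v2)];
      auto using smooth3_C1.
  - unfold loop_grad, along.
    set (X := loop1 phi1 c01 c02 t s). set (Y := loop2 phi2 c01 c02 t s).
    assert (M1 := EP_momentum1 X Y t). assert (M2 := EP_momentum2 X Y t).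
    replace (material v1 v2 u1 X Y t) with (dx K X Y t - dx pt X Y t / rho X Y t
      - u1 X Y t * dx v1 X Y t - u2 X Y t * dx v2 X Y t) by lra.
    replace (material v1 v2 u2 X Y t) with (dy K X Y t - dy pt X Y t / rho X Y t
      - u1 X Y t * dy v1 X Y t - u2 X Y t * dy v2 X Y t) by lra.
    unfold Rdiv. ring.
Qed.

Lemma continuous2_circ_density : continuous2 circ_density.
Proof.
  unfold circ_density.
  apply continuous2_plus; apply continuous2_mult;
    [apply continuous2_along, C1_cont3, C1_mom1|apply continuous2_tangent, smooth3_C1, Hphi1
    |apply continuous2_along, C1_cont3, C1_mom2|apply continuous2_tangent, smooth3_C1, Hphi2].
Qed.

Lemma continuous2_pressure_density : continuous2 (fun t s => / along rho t s * loop_grad pt t s).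
Proof.
  apply continuous2_mult; [|apply continuous2_loop_grad, C1_ptilde].
  apply continuous2_inv; [apply continuous2_along, C1_cont3, smooth3_C1, Hrho|].
  intros t s. apply Rgt_not_eq, Hrho_pos.
Qed.

Lemma is_RInt_loop_int_inv_rho t :
  is_RInt (fun s => / along rho t s * loop_grad pt t s) 0 1
    (loop_int_inv_rho_d rho pt phi1 phi2 c01 c02 t).
Proof.
  unfold loop_int_inv_rho_d.
  rewrite (RInt_ext _ (fun s => / along rho t s * loop_grad pt t s)).
  - apply (RInt_correct (V := R_CompleteNormedModule)), ex_RInt_continuous.
    intros s _. exact (continuous2_slice _ t s continuous2_pressure_density).
  - intros s _. f_equal. apply is_derive_unique, is_derive_along_s, C1_ptilde.
Qed.

Theorem kelvin_circulation t :
  is_derive (circulation sigma2 v1 v2 zeta phi1 phi2 c01 c02) t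
    (- loop_int_inv_rho_d rho pt phi1 phi2 c01 c02 t).
Proof.
  apply (is_derive_ext (fun t => RInt (circ_density t) 0 1));
    [intros u; symmetry; apply circulation_eq|].
  eapply is_derive_value.
  - apply is_derive_RInt_param.
    + apply filter_forall. intros u s _. eexists. apply is_derive_circ_density.
    + intros s _.
      apply (continuity_2d_pt_ext
               (fun u s => loop_grad K u s - / along rho u s * loop_grad pt u s)).
      * intros u r. symmetry. apply is_derive_unique, is_derive_circ_density.
      * apply continuous2_continuity_2d_pt, continuous2_minus;
          [apply continuous2_loop_grad, C1_kinetic|apply continuous2_pressure_density].
    + apply filter_forall. intros u.
      apply (ex_RInt_continuous (V := R_CompleteNormedModule)). intros s _.
      exact (continuous2_slice _ u s continuous2_circ_density).
  - rewrite (RInt_ext _ (fun s => loop_grad K t s - / along rho t s * loop_grad pt t s))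
      by (intros s _; apply is_derive_unique, is_derive_circ_density).
    apply is_RInt_unique. rewrite <- Rminus_0_l.
    exact (is_RInt_minus _ _ 0 1 _ _ (is_RInt_loop_grad_closed K t C1_kinetic)
             (is_RInt_loop_int_inv_rho t)).
Qed.

End Kelvin.

End Flow.

Theorem mainTheorem1
  (sigma2 Fr2 rhoref : R) (v1 v2 zeta rho D p phi1 phi2 : field) (c01 c02 : R -> R)
  (Hsigma : 0 < sigma2) (HFr : 0 < Fr2)
  (Hv1 : smooth3 v1) (Hv2 : smooth3 v2) (Hzeta : smooth3 zeta) (Hrho : smooth3 rho)
  (HD : smooth3 D) (Hp : smooth3 p) (Hphi1 : smooth3 phi1) (Hphi2 : smooth3 phi2)
  (Hrho_pos : forall x y t, 0 < rho x y t)
  (HEP : EP_equations sigma2 rhoref Fr2 v1 v2 zeta rho D p)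
  (Hflow : is_flow v1 v2 phi1 phi2)
  (Hc01 : smooth1 c01) (Hc02 : smooth1 c02)
  (Hclosed : c01 0 = c01 1 /\ c02 0 = c02 1) :
  forall t : R,
    is_derive (circulation sigma2 v1 v2 zeta phi1 phi2 c01 c02) t
      (- loop_int_inv_rho_d rho (ptilde rhoref Fr2 p zeta) phi1 phi2 c01 c02 t).
Proof. intros t. apply kelvin_circulation with (D := D); assumption. Qed.
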